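(* Let $m\ge 0$ be an integer. Any two singly even self-dual $[24m+4,12m+2,4m+2]$ codes with minimal shadow have the same weight enumerator; that is, the weight enumerator of a singly even self-dual $[24m+4,12m+2,4m+2]$ code with minimal shadow is uniquely determined by $m$.
   Context: A binary code of length $n$ is a subspace of $\mathbb{F}_2^n$; $C^\perp$ is its dual with respect to the standard inner product, and $C$ is self-dual if $C=C^\perp$. A self-dual code is singly even if it contains a codeword of weight $\equiv 2 \pmod 4$. For a singly even self-dual code $C$, let $C_0$ be the subcode of codewords of weight $\equiv 0\pmod 4$; the shadow of $C$ is $S=C_0^\perp\setminus C$. For $n\equiv 4\pmod 8$, $C$ is said to have minimal shadow if the minimum weight of $S$ equals $2$. An $[n,k,d]$ code is a code of length $n$, dimension $k$ and minimum weight $d$. The weight enumerator of $C$ is $\sum_{x\in C} y^{\mathrm{wt}(x)}$. *)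

From HB Require Import structures.
From mathcomp Require Import all_boot all_order all_algebra.
Set Implicit Arguments. Unset Strict Implicit. Unset Printing Implicit Defensive.
Import GRing.Theory.
Local Open Scope ring_scope.

Section Codes.
Variable n : nat.
Notation vec := 'rV['F_2]_n.

Definition wt (x : vec) : nat := #|[set i : 'I_n | x 0 i != 0]|.

Definition dot (x y : vec) : 'F_2 := \sum_(i < n) x 0 i * y 0 i.

Definition in_dual (C : {vspace vec}) (x : vec) : bool :=
  [forall y : vec, (y \in C) ==> (dot x y == 0)].

Definition self_dual (C : {vspace vec}) : Prop :=
  forall x : vec, (x \in C) = in_dual C x.

Definition singly_even (C : {vspace vec}) : Prop :=
  exists2 x : vec, x \in C & (wt x %% 4 = 2)%N.

Definition in_C0 (C : {vspace vec}) (x : vec) : bool :=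
  (x \in C) && (wt x %% 4 == 0)%N.

Definition in_shadow (C : {vspace vec}) (x : vec) : bool :=
  [forall y : vec, in_C0 C y ==> (dot x y == 0)] && (x \notin C).

Definition minimal_shadow (C : {vspace vec}) : Prop :=
  (exists2 s : vec, in_shadow C s & wt s = 2%N) /\
  (forall s : vec, in_shadow C s -> (2 <= wt s)%N).

Definition is_nkd_code (C : {vspace vec}) (k d : nat) : Prop :=
  \dim C = k /\
  (exists2 x : vec, (x \in C) && (x != 0) & wt x = d) /\
  (forall x : vec, x \in C -> x != 0 -> (d <= wt x)%N).

Definition weight_enum (C : {vspace vec}) : {poly int} :=
  \sum_(x : vec | x \in C) 'X^(wt x).

End Codes.

From mathcomp Require Import all_boot all_order all_algebra finfield algC.
From mathcomp Require Import ring zify.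
Set Implicit Arguments. Unset Strict Implicit. Unset Printing Implicit Defensive.
Import GRing.Theory Num.Theory.
Local Open Scope ring_scope.

(* View the weight enumerator W_C as a polynomial over the algebraic numbers,
   and for n = 24m+4 put T p = (1+y)^n p((1-y)/(1+y)) and
   U p = (1+y)^n p(i(1-y)/(1+y)).  Self-duality gives the MacWilliams identity
   T W_C = |C| W_C, and describing the shadow by the characters
   u |-> i^wt(u) (-1)^(u.v) of C gives U W_C = |C| S_C.
   For two codes as in the theorem |C| = |D|, so P = W_C - W_D is even,
   satisfies T P = |C| P, vanishes to order r = 4m+2 at 0 (minimum weight), and
   U P vanishes to order 4m at 0 (each shadow has exactly one vector of weight
   below 4m, of weight 2).  Since T (y^n p(1/y)) = (T p)(-y), the even
   eigenvector P is palindromic; T (y^r Q) = (1-y)^r T Q and evenness make P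
   vanish to order r at 1 and -1, so P = Q y^r (y^2-1)^r with deg Q <= 8m-4.
   Then U Q is palindromic of degree 8m-4 and vanishes to order 4m at 0, so
   U Q = 0 and Q = 0. *)

Section HomogeneousSubstitution.
Variable R : comNzRingType.
Implicit Types (p q a b : {poly R}).

(* [hsubst n p a b] is the degree-[n] homogenization [Y^n p(X/Y)] of [p],
   evaluated at [X := b], [Y := a]. *)
Definition hsubst n p a b : {poly R} :=
  \sum_(i < n.+1) p`_i *: (a ^+ (n - i) * b ^+ i).

Lemma hsubst_sum (I : Type) (r : seq I) (P : pred I) (F : I -> {poly R}) n a b :
  hsubst n (\sum_(x <- r | P x) F x) a b = \sum_(x <- r | P x) hsubst n (F x) a b.
Proof.
rewrite /hsubst; under eq_bigr do rewrite coef_sum scaler_suml.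
exact: exchange_big.
Qed.

Lemma hsubstZ n c p a b : hsubst n (c *: p) a b = c *: hsubst n p a b.
Proof. by rewrite /hsubst scaler_sumr; apply: eq_bigr => i _; rewrite coefZ scalerA. Qed.

Lemma hsubstB n p q a b : hsubst n (p - q) a b = hsubst n p a b - hsubst n q a b.
Proof.
rewrite /hsubst -sumrB; apply: eq_bigr => i _.
by rewrite coefB scalerBl.
Qed.

Lemma hsubst0 n a b : hsubst n 0 a b = 0.
Proof. by rewrite /hsubst big1 // => i _; rewrite coef0 scale0r. Qed.

Lemma hsubst_Xn n w a b : (w <= n)%N -> hsubst n 'X^w a b = a ^+ (n - w) * b ^+ w.
Proof.
move=> le_wn; rewrite /hsubst (bigD1 (Ordinal (le_wn : w < n.+1)%N)) //=.
rewrite coefXn eqxx scale1r big1 ?addr0 // => i /eqP neq_iw.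
by rewrite coefXn; case: eqP => [eq_iw|]; [case: neq_iw; apply: val_inj | rewrite scale0r].
Qed.

Lemma hsubst1 p a b : hsubst 1 p a b = p`_0 *: a + p`_1 *: b.
Proof. by rewrite /hsubst big_ord_recr big_ord1 /= subn0 subnn !expr0 expr1 mulr1 mul1r. Qed.

Lemma size_exp_leq_lin a k : (size a <= 2)%N -> (size (a ^+ k) <= k.+1)%N.
Proof.
move=> sz_a; have le_a1 : ((size a).-1 <= 1)%N by lia.
apply: leq_trans (size_poly_exp_leq a k) _.
by rewrite ltnS -[X in (_ <= X)%N]mul1n leq_mul2r le_a1 orbT.
Qed.

Lemma comp_poly_wide n p q :
  (size p <= n)%N -> p \Po q = \sum_(i < n) p`_i *: q ^+ i.
Proof.
move=> le_pn; rewrite comp_polyE (big_ord_widen n (fun i => p`_i *: q ^+ i)) //.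
rewrite big_mkcond; apply: eq_bigr => i _.
by case: ltnP => // le_pi; rewrite nth_default ?scale0r.
Qed.

Lemma poly_sum_coefX n p : (size p <= n)%N -> p = \sum_(i < n) p`_i *: 'X^i.
Proof. by move=> le_pn; rewrite -comp_poly_wide ?comp_polyXr. Qed.

Lemma hsubst1l_comp n p q : (size p <= n.+1)%N -> hsubst n p 1 q = p \Po q.
Proof.
by move=> le_pn; rewrite (comp_poly_wide _ le_pn); apply: eq_bigr => i _; rewrite expr1n mul1r.
Qed.

Lemma hsubst1X n p : (size p <= n.+1)%N -> hsubst n p 1 'X = p.
Proof. by move=> le_pn; rewrite hsubst1l_comp ?comp_polyXr. Qed.

Lemma hsubstM k l p q a b : (size p <= k.+1)%N -> (size q <= l.+1)%N ->
  hsubst (k + l) (p * q) a b = hsubst k p a b * hsubst l q a b.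
Proof.
move=> sz_p sz_q; rewrite {1}(poly_sum_coefX sz_p) {1}(poly_sum_coefX sz_q).
rewrite mulr_suml hsubst_sum [hsubst k p a b]/hsubst mulr_suml.
apply: eq_bigr => i _; rewrite mulr_sumr hsubst_sum [hsubst l q a b]/hsubst mulr_sumr.
apply: eq_bigr => j _; have := ltn_ord i; have := ltn_ord j => lt_jl lt_ik.
rewrite -scalerAl -scalerAr scalerA -exprD hsubstZ hsubst_Xn; last by lia.
rewrite -scalerAl -scalerAr scalerA (_ : k + l - (i + j) = (k - i) + (l - j))%N; last by lia.
by rewrite exprD [b ^+ (i + j)]exprD mulrACA.
Qed.

Lemma hsubst_exp k p a b :
  (size p <= 2)%N -> hsubst k (p ^+ k) a b = hsubst 1 p a b ^+ k.
Proof.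
move=> sz_p; elim: k => [|k IHk].
  by rewrite !expr0 -(expr0 'X) hsubst_Xn // !expr0 mulr1.
by rewrite exprS -add1n hsubstM ?IHk ?exprS //; apply: size_exp_leq_lin.
Qed.

Lemma hsubst_comp n p a b a' b' : (size a <= 2)%N -> (size b <= 2)%N ->
  hsubst n (hsubst n p a b) a' b' = hsubst n p (hsubst 1 a a' b') (hsubst 1 b a' b').
Proof.
move=> sz_a sz_b; rewrite [hsubst n p a b]/hsubst hsubst_sum; apply: eq_bigr => i _.
rewrite hsubstZ; congr (_ *: _); have := ltn_ord i => lt_in.
rewrite {1}(_ : n = n - i + i)%N; last by lia.
rewrite hsubstM; try exact: size_exp_leq_lin.
by rewrite (hsubst_exp (n - i)) // (hsubst_exp i).
Qed.

Lemma hsubst_scale n p c a b :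
  hsubst n p (c *: a) (c *: b) = c ^+ n *: hsubst n p a b.
Proof.
rewrite /hsubst scaler_sumr; apply: eq_bigr => i _; have := ltn_ord i => lt_in.
rewrite !exprZn -scalerAl -scalerAr !scalerA -mulrA -exprD subnK //.
by rewrite mulrC.
Qed.

Lemma size_hsubst n p a b : (size a <= 2)%N -> (size b <= 2)%N ->
  (size (hsubst n p a b) <= n.+1)%N.
Proof.
move=> sz_a sz_b; apply: leq_trans (size_sum _ _ _) _; apply/bigmax_leqP => i _.
apply: leq_trans (size_scale_leq _ _) _; apply: leq_trans (size_mul_leq _ _) _.
have := size_exp_leq_lin (n - i) sz_a; have := size_exp_leq_lin i sz_b.
have := ltn_ord i; lia.
Qed.

Lemma horner_hsubst n p a b x : (size p <= n.+1)%N -> a.[x] = 1 ->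
  (hsubst n p a b).[x] = p.[b.[x]].
Proof.
move=> sz_p a1; rewrite /hsubst horner_sum (horner_coef_wide _ sz_p).
by apply: eq_bigr => i _; rewrite hornerZ hornerM !horner_exp a1 expr1n mul1r.
Qed.

Definition recip n p := hsubst n p 'X 1.

Lemma coef_recip n p j : (j <= n)%N -> (recip n p)`_j = p`_(n - j).
Proof.
move=> le_jn; have lt_nj_n1 : (n - j < n.+1)%N by rewrite ltnS leq_subr.
rewrite /recip /hsubst coef_sum (bigD1 (Ordinal lt_nj_n1)) //=.
rewrite expr1n mulr1 coefZ coefXn subKn // eqxx mulr1 big1 ?addr0 // => i /eqP neq_ij.
rewrite expr1n mulr1 coefZ coefXn; case: eqP => [eq_ij|]; last by rewrite mulr0.
by case: neq_ij; apply: val_inj => /=; have := ltn_ord i; lia.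
Qed.

Lemma size_recip_fixed n k p : (size p <= n.+1)%N -> recip n p = p ->
  (forall j, (j < k)%N -> p`_j = 0) -> (size p <= n.+1 - k)%N.
Proof.
move=> sz_p rec_p low_p; apply/leq_sizeP => j le_j.
have [le_jn|lt_nj] := leqP j n; last by rewrite nth_default //; apply: leq_trans sz_p _.
by rewrite -rec_p coef_recip // low_p //; lia.
Qed.

Lemma recip_fixed_eq0 n k p : (n < k + k)%N -> (size p <= n.+1)%N -> recip n p = p ->
  (forall j, (j < k)%N -> p`_j = 0) -> p = 0.
Proof.
move=> lt_n2k sz_p rec_p low_p; apply/polyP => j; rewrite coef0.
have [lt_jk|le_kj] := ltnP j k; first exact: low_p.
by rewrite nth_default //; apply: leq_trans (size_recip_fixed sz_p rec_p low_p) _; lia.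
Qed.

End HomogeneousSubstitution.

Section XnDivisibility.
Variable R : fieldType.
Implicit Types (p q : {poly R}).

Lemma dvdp_XnP k p : reflect (forall j, (j < k)%N -> p`_j = 0) ('X^k %| p).
Proof.
rewrite /dvdp -Pdiv.IdomainMonic.take_poly_modp; apply: (iffP eqP) => [take0 j lt_jk | low_p].
  by have := congr1 (coefp j) take0; rewrite /= coef_take_poly lt_jk coef0.
by apply/polyP => j; rewrite coef_take_poly coef0; case: ltnP => // /low_p.
Qed.

Lemma coprimep_Xn k q : q`_0 != 0 -> coprimep 'X^k q.
Proof.
move=> q0; rewrite -[X in X ^+ k]subr0; apply: coprimep_expl.
by rewrite coprimep_sym coprimep_XsubC rootE horner_coef0.
Qed.

Lemma dvdp_Xn_mulr_coef0 k p q : q`_0 != 0 -> ('X^k %| p * q) = ('X^k %| p).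
Proof. by move=> q0; apply/Gauss_dvdpl/coprimep_Xn. Qed.

End XnDivisibility.

Section Transforms.
Variable R : numClosedFieldType.
Implicit Types (p q : {poly R}).

Definition macwilliams n p := hsubst n p (1 + 'X) (1 - 'X).
Definition shadow_transform n p := hsubst n p (1 + 'X) ('i *: (1 - 'X)).

Lemma macwilliamsB n p q : macwilliams n (p - q) = macwilliams n p - macwilliams n q.
Proof. exact: hsubstB. Qed.

Lemma shadow_transformB n p q :
  shadow_transform n (p - q) = shadow_transform n p - shadow_transform n q.
Proof. exact: hsubstB. Qed.

Let size_1DX : (size (1 + 'X : {poly R})%R <= 2)%N.
Proof. by rewrite addrC size_XaddC. Qed.

Let size_1BX : (size (1 - 'X : {poly R})%R <= 2)%N.
Proof. by rewrite -opprB size_opp size_XsubC. Qed.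

Let size_i1BX : (size ('i *: (1 - 'X) : {poly R})%R <= 2)%N.
Proof. exact: leq_trans (size_scale_leq _ _) size_1BX. Qed.

Let size_iX : size ('i *: 'X : {poly R}) = 2.
Proof. by rewrite size_scale ?neq0Ci ?size_polyX. Qed.

Let size_oppX : (size (- 'X : {poly R})%R <= 2)%N.
Proof. by rewrite size_opp size_polyX. Qed.

Ltac coefs_eq := apply/polyP => j;
  rewrite !(coefD, coefZ, coefB, coefN, coef1, coefX) /=; ring.

Lemma macwilliamsK n p : (size p <= n.+1)%N ->
  macwilliams n (macwilliams n p) = 2%:R ^+ n *: p.
Proof.
move=> sz_p; rewrite /macwilliams hsubst_comp // !hsubst1.
rewrite (_ : _ + _ = 2%:R *: 1); last by coefs_eq.
rewrite (_ : _ + _ = 2%:R *: 'X); last by coefs_eq.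
by rewrite hsubst_scale hsubst1X.
Qed.

Lemma macwilliams_inj n p q : (size p <= n.+1)%N -> (size q <= n.+1)%N ->
  macwilliams n p = macwilliams n q -> p = q.
Proof.
move=> sz_p sz_q /(congr1 (macwilliams n)); rewrite !macwilliamsK //.
by apply: scalerI; rewrite expf_neq0 // pnatr_eq0.
Qed.

Lemma macwilliams_recip n p : (size p <= n.+1)%N ->
  macwilliams n (recip n p) = macwilliams n p \Po (- 'X).
Proof.
move=> sz_p; rewrite -(hsubst1l_comp (n := n)) ?size_hsubst //.
rewrite /macwilliams /recip !hsubst_comp ?size_polyX ?size_poly1 // !hsubst1.
by congr hsubst; coefs_eq.
Qed.

Lemma recip_fixed_macwilliams_eigen n p c : (size p <= n.+1)%N ->
  p \Po (- 'X) = p -> macwilliams n p = c *: p -> recip n p = p.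
Proof.
move=> sz_p even_p eigen_p; apply: (macwilliams_inj (n := n)) => //.
  by rewrite size_hsubst ?size_polyX ?size_poly1.
by rewrite macwilliams_recip // eigen_p comp_polyZ even_p.
Qed.

Lemma shadow_transformE n p : (size p <= n.+1)%N ->
  shadow_transform n p = macwilliams n (p \Po ('i *: 'X)).
Proof.
move=> sz_p; rewrite -(hsubst1l_comp (n := n)) // /macwilliams.
rewrite hsubst_comp ?size_poly1 ?size_iX //.
by rewrite !hsubst1; congr hsubst; coefs_eq.
Qed.

Lemma shadow_transform_eq0 n p : (size p <= n.+1)%N ->
  shadow_transform n p = 0 -> p = 0.
Proof.
move=> sz_p shadow0.
have comp0 : p \Po ('i *: 'X) = 0.
  apply: (macwilliams_inj (n := n)); rewrite ?size_comp_poly2 ?size_poly0 //.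
  by rewrite -shadow_transformE // shadow0 /macwilliams hsubst0.
by apply/eqP; rewrite -(comp_poly2_eq0 _ size_iX) comp0.
Qed.

Lemma recip_shadow_transform n p : (size p <= n.+1)%N ->
  recip n (shadow_transform n p) = shadow_transform n (p \Po (- 'X)).
Proof.
move=> sz_p; rewrite -(hsubst1l_comp (n := n)) // /recip /shadow_transform.
rewrite !hsubst_comp ?size_polyX ?size_poly1 // !hsubst1.
by congr hsubst; coefs_eq.
Qed.

Lemma coef0_shadow_transform n p : (size p <= n.+1)%N ->
  (shadow_transform n p)`_0 = p.['i].
Proof.
move=> sz_p; rewrite -horner_coef0 horner_hsubst //; first by rewrite !hornerE subr0 mulr1.
by rewrite !hornerE ?addr0.
Qed.

Lemma even_shadow_transform_eq0 n k p : (n < k + k)%N -> (size p <= n.+1)%N ->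
  p \Po (- 'X) = p -> (forall j, (j < k)%N -> (shadow_transform n p)`_j = 0) -> p = 0.
Proof.
move=> lt_n2k sz_p even_p low_p; apply: (shadow_transform_eq0 sz_p).
apply: (recip_fixed_eq0 lt_n2k) low_p; first exact: size_hsubst.
by rewrite recip_shadow_transform // even_p.
Qed.

End Transforms.

Section RootFactor.
Variable R : numClosedFieldType.
Implicit Types (p q : {poly R}).

Definition root_factor r : {poly R} := 'X^r * ('X^2 - 1) ^+ r.

Lemma size_root_factor r : size (root_factor r) = (3 * r).+1.
Proof.
have nz_X2B1 : ('X^2 - 1 : {poly R}) ^+ r != 0.
  by rewrite expf_neq0 ?monic_neq0 ?monic_Xn_sub_1.
rewrite /root_factor size_mul //; last by rewrite -size_poly_eq0 size_polyXn.
by rewrite size_polyXn (polySpred nz_X2B1) size_exp size_Xn_sub_1 //=; lia.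
Qed.

Lemma root_factor_even r : ~~ odd r -> root_factor r \Po (- 'X) = root_factor r.
Proof.
move=> /negbTE even_r; rewrite /root_factor rmorphM !rmorphXn rmorphB /= rmorph1.
rewrite comp_polyX comp_Xn_poly sqrrN; congr (_ * _).
by rewrite -[r]odd_double_half even_r add0n -mul2n !exprM sqrrN.
Qed.

Lemma root_factor_i_neq0 r : (root_factor r).['i] != 0.
Proof.
rewrite /root_factor hornerM hornerXn horner_exp !hornerE sqrCi.
by rewrite mulf_neq0 ?expf_neq0 ?neq0Ci // subr_eq0 eqNr oner_eq0.
Qed.

Lemma dvdp_root_factor n r p c : c != 0 -> (r <= n)%N -> (size p <= n.+1)%N ->
  p \Po (- 'X) = p -> macwilliams n p = c *: p -> 'X^r %| p -> root_factor r %| p.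
Proof.
move=> c_neq0 le_rn sz_p even_p eigen_p Xr_p; have /dvdpP [q def_p] := Xr_p.
have sz_q : (size q <= (n - r).+1)%N.
  have [->|nz_q] := eqVneq q 0; first by rewrite size_poly0.
  move: sz_p; rewrite def_p size_mulXn // => sz_qXr.
  by rewrite -(leq_add2l r) addnS (subnKC le_rn).
have XB1_p : ('X - 1) ^+ r %| p.
  rewrite -(dvdpZr _ _ c_neq0) -eigen_p def_p /macwilliams -{1}(subnK le_rn).
  rewrite hsubstM ?size_polyXn // hsubst_Xn // subnn expr0 mul1r.
  by apply/dvdp_mull/dvdp_exp2r; rewrite -[1 - 'X]opprB dvdpNr.
have XD1_p : ('X + 1) ^+ r %| p.
  rewrite -even_p; apply: dvdp_trans (dvdp_comp_poly _ XB1_p).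
  rewrite rmorphXn rmorphB /= comp_polyX rmorph1.
  by apply/dvdp_exp2r; rewrite -[- 'X - 1]opprD dvdpNr.
have XB1_XD1 : coprimep (('X - 1) ^+ r : {poly R}) (('X + 1) ^+ r).
  rewrite -[X in 'X - X]polyC1 (_ : 'X + 1 = 'X - (-1)%:P); last by rewrite polyCN opprK.
  apply/coprimep_expl/coprimep_expr.
  by rewrite coprimep_XsubC2 // subr_eq0 eqNr oner_eq0.
have X_X2B1 : coprimep ('X^r : {poly R}) (('X^2 - 1) ^+ r).
  apply: coprimep_Xn; rewrite -horner_coef0 horner_exp !hornerE expr0n /= sub0r.
  by rewrite expf_neq0 // oppr_eq0 oner_eq0.
rewrite /root_factor (Gauss_dvdp _ X_X2B1) Xr_p /=.
rewrite (_ : 'X^2 - 1 = ('X - 1) * ('X + 1)); last by rewrite -subr_sqr expr1n.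
by rewrite exprMn (Gauss_dvdp _ XB1_XD1) XB1_p.
Qed.

Lemma even_macwilliams_eigen_eq0 m p c : c != 0 ->
  (size p <= (24 * m + 4).+1)%N -> p \Po (- 'X) = p ->
  macwilliams (24 * m + 4) p = c *: p -> 'X^(4 * m + 2) %| p ->
  'X^(4 * m) %| shadow_transform (24 * m + 4) p -> p = 0.
Proof.
set n := (24 * m + 4)%N; set r := (4 * m + 2)%N.
move=> c_neq0 sz_p even_p eigen_p Xr_p Xs_p.
have le_rn : (r <= n)%N by lia.
have /dvdpP [q def_p] := dvdp_root_factor c_neq0 le_rn sz_p even_p eigen_p Xr_p.
have [q0|nz_q] := eqVneq q 0; first by rewrite def_p q0 mul0r.
have nz_g : root_factor r != 0 by rewrite -size_poly_eq0 size_root_factor.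
have sz_qg : (size q + 3 * r <= n.+1 - r)%N.
  have := size_recip_fixed sz_p (recip_fixed_macwilliams_eigen sz_p even_p eigen_p)
    (dvdp_XnP _ _ Xr_p).
  by rewrite def_p size_mul // size_root_factor addnS.
have m_gt0 : (0 < m)%N by move: sz_qg; rewrite -size_poly_eq0 in nz_q; lia.
set N := (8 * m - 4)%N.
have sz_q : (size q <= N.+1)%N by lia.
have even_q : q \Po (- 'X) = q.
  apply: (mulIf nz_g); rewrite -{1}(root_factor_even _) -?rmorphM /= -?def_p //.
  by rewrite /r oddD oddM.
have g0 : (shadow_transform (4 * r) (root_factor r))`_0 != 0.
  by rewrite coef0_shadow_transform ?root_factor_i_neq0 // size_root_factor; lia.
have : 'X^(4 * m) %| shadow_transform N q.
  rewrite -(dvdp_Xn_mulr_coef0 _ _ g0) /shadow_transform -hsubstM ?size_root_factor //.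
    by rewrite -def_p (_ : N + 4 * r = n)%N //; lia.
  by lia.
move/dvdp_XnP/(even_shadow_transform_eq0 _ sz_q even_q) => q0.
by case/eqP: nz_q; apply: q0; lia.
Qed.

End RootFactor.

Lemma F2_cases (x : 'F_2) : x = 0 \/ x = 1.
Proof. by case: x => [[|[|k]] // lt_k2]; [left|right]; apply: val_inj. Qed.

Lemma F2_natr_eq0 k : ((k%:R : 'F_2) == 0) = ~~ odd k.
Proof. by rewrite -val_eqE /= (@val_Fp_nat 2) // modn2; case: odd. Qed.

Lemma F2_addrr (x : 'F_2) : x + x = 0.
Proof. exact/addrr_pchar2/pchar_Fp. Qed.

Definition signF2 {R : numDomainType} (b : 'F_2) : R := (-1) ^+ (b != 0).

Lemma signF2_0 (R : numDomainType) : signF2 0 = 1 :> R.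
Proof. by rewrite /signF2 eqxx. Qed.

Lemma signF2D (R : numDomainType) : {morph @signF2 R : a b / a + b >-> a * b}.
Proof.
move=> a b; rewrite /signF2.
case: (F2_cases a) => ->; case: (F2_cases b) => ->;
  by rewrite ?F2_addrr ?addr0 ?add0r ?eqxx ?oner_eq0 /= ?expr0 ?expr1 ?mulrNN ?mulr1 ?mul1r.
Qed.

Lemma signF2_eq1 (R : numDomainType) b : (signF2 b == 1 :> R) = (b == 0).
Proof.
by case: (F2_cases b) => ->; rewrite /signF2 ?eqxx ?oner_eq0 //= expr1 eqNr oner_eq0.
Qed.

Section Vectors.
Variable n : nat.
Notation vec := 'rV['F_2]_n.
Implicit Types (u v x y z : vec).

Lemma addvv v : v + v = 0.
Proof. by apply/rowP => i; rewrite !mxE F2_addrr. Qed.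

Lemma dotC x y : dot x y = dot y x.
Proof. by apply: eq_bigr => i _; rewrite mulrC. Qed.

Lemma dotDl x y z : dot (x + y) z = dot x z + dot y z.
Proof. by rewrite /dot -big_split; apply: eq_bigr => i _; rewrite mxE mulrDl. Qed.

Lemma dotDr x y z : dot x (y + z) = dot x y + dot x z.
Proof. by rewrite dotC dotDl !(dotC x). Qed.

Lemma wt_le x : (wt x <= n)%N.
Proof. by rewrite /wt -[X in (_ <= X)%N]card_ord max_card. Qed.

Lemma wt0 : wt (0 : vec) = 0%N.
Proof. by apply/eqP; rewrite cards_eq0; apply/eqP/setP => i; rewrite !inE mxE eqxx. Qed.

Definition meet_wt x y := #|[set i | (x 0 i != 0) && (y 0 i != 0)]|.

Lemma meet_wtxx x : meet_wt x x = wt x.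
Proof. by apply: eq_card => i; rewrite !inE andbb. Qed.

Lemma dot_meet_wt x y : dot x y = (meet_wt x y)%:R.
Proof.
rewrite /dot (eq_bigr (fun i => if (x 0 i != 0) && (y 0 i != 0) then 1 else 0)).
  by rewrite -big_mkcond sumr_const; congr (_ *+ _); apply: eq_card => i; rewrite inE.
by move=> i _; case: (F2_cases (x 0 i)) => ->; case: (F2_cases (y 0 i)) => ->;
  rewrite ?mulr0 ?mul0r ?mulr1 ?eqxx ?oner_eq0.
Qed.

Lemma wtD x y : (wt (x + y) + 2 * meet_wt x y = wt x + wt y)%N.
Proof.
rewrite /wt /meet_wt; set A := [set i | x 0 i != 0]; set B := [set i | y 0 i != 0].
have -> : [set i | (x 0 i != 0) && (y 0 i != 0)] = A :&: B by apply/setP => i; rewrite !inE.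
have -> : [set i | (x + y) 0 i != 0] = (A :|: B) :\: (A :&: B).
  apply/setP => i; rewrite !inE mxE.
  by case: (F2_cases (x 0 i)) => ->; case: (F2_cases (y 0 i)) => ->;
    rewrite ?addr0 ?add0r ?F2_addrr ?eqxx ?oner_eq0.
have sub_IU : A :&: B \subset A :|: B := subset_trans (subsetIl A B) (subsetUl A B).
rewrite cardsD (setIidPr sub_IU) -cardsUI.
by have := subset_leq_card sub_IU; lia.
Qed.

Lemma wt_addr_le x y : (wt (x + y) <= wt x + wt y)%N.
Proof. by rewrite -wtD leq_addr. Qed.

End Vectors.

Lemma sum_rV_prod (K : finType) (R : comNzRingType) n (F : 'I_n -> K -> R) :
  \sum_(v : 'rV[K]_n) \prod_i F i (v 0 i) = \prod_i \sum_(b : K) F i b.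
Proof.
rewrite bigA_distr_bigA.
have row_ffun : bijective (fun f : {ffun 'I_n -> K} => \row_i f i).
  by exists (fun v : 'rV[K]_n => [ffun i => v 0 i]) => [f|v]; [apply/ffunP|apply/rowP] => i;
    rewrite ?ffunE mxE ?ffunE.
rewrite (reindex _ (onW_bij _ row_ffun)); apply: eq_bigr => f _.
by apply: eq_bigr => i _; rewrite mxE.
Qed.

Section Hadamard.
Variables (R : numDomainType) (n : nat).
Notation vec := 'rV['F_2]_n.

Lemma hadamard_Xwt (u : vec) :
  \sum_(v : vec) signF2 (dot u v) *: ('X^(wt v) : {poly R}) =
  (1 + 'X) ^+ (n - wt u) * (1 - 'X) ^+ (wt u).
Proof.
pose F i (b : 'F_2) : {poly R} := signF2 (u 0 i * b) *: 'X^(b != 0).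
have prodF v : signF2 (dot u v) *: 'X^(wt v) = \prod_i F i (v 0 i).
  rewrite /F scaler_prod -(big_morph _ (@signF2D R) (signF2_0 R)) prodrXr.
  congr (_ *: 'X^_); rewrite /wt -sum1_card big_mkcond /=.
  by apply: eq_bigr => i _; rewrite inE; case: (_ != 0).
have sumF i : \sum_(b : 'F_2) F i b = 1 + signF2 (u 0 i) *: 'X.
  rewrite (bigD1 0) //= (big_pred1 1) => [|b]; last first.
    by case: (F2_cases b) => ->; rewrite ?eqxx ?oner_eq0.
  by rewrite /F mulr0 mulr1 eqxx oner_eq0 expr0 scale1r.
under eq_bigr do rewrite prodF.
rewrite sum_rV_prod; under eq_bigr do rewrite sumF.
rewrite (bigID (fun i => u 0 i == 0)) /=.
rewrite (eq_bigr (fun _ => 1 + 'X)) => [|i /eqP ->]; last by rewrite scale1r.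
rewrite [X in _ * X](eq_bigr (fun _ => 1 - 'X)) => [|i /negbTE u_i]; last first.
  by rewrite /signF2 u_i expr1 scaleN1r.
rewrite !prodr_const /wt; congr (_ ^+ _ * _ ^+ _); last by apply: eq_card => i; rewrite inE.
rewrite -[n in (n - _)%N]card_ord -(cardsC [set i | u 0 i != 0]) addKn.
by apply: eq_card => i; rewrite !inE negbK.
Qed.

End Hadamard.

Section CharacterSum.
Variables (R : idomainType) (n : nat) (C : {vspace 'rV['F_2]_n}).

Lemma sum_character (chi : 'rV['F_2]_n -> R) :
  {in C &, {morph chi : x y / x + y >-> x * y}} ->
  \sum_(u in C) chi u = if [forall u in C, chi u == 1] then #|C|%:R else 0.
Proof.
move=> chiM; case: ifP => [/forall_inP chi1 | /forall_inPn [w w_C chi_w]].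
  by rewrite (eq_bigr (fun _ => 1)) ?sumr_const // => u /chi1/eqP.
have shift : \sum_(u in C) chi u = chi w * \sum_(u in C) chi u.
  rewrite mulr_sumr (reindex_inj (addrI w)) /=.
  rewrite (eq_bigl (mem C)) => [|u]; last by rewrite rpredDl.
  by apply: eq_bigr => u u_C; rewrite chiM.
have : (1 - chi w) * \sum_(u in C) chi u = 0 by rewrite mulrBl mul1r -shift subrr.
by move/eqP; rewrite mulf_eq0 subr_eq0 eq_sym (negbTE chi_w) => /eqP.
Qed.

End CharacterSum.

Section SelfDual.
Variables (n : nat) (C : {vspace 'rV['F_2]_n}).
Hypothesis sdC : self_dual C.
Implicit Types (u v x y : 'rV['F_2]_n).

Lemma self_dual_dot x y : x \in C -> y \in C -> dot x y = 0.
Proof. by rewrite sdC => /forallP /(_ y) /implyP xy y_C; apply/eqP/xy. Qed.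

Lemma meet_wt_even x y : x \in C -> y \in C -> ~~ odd (meet_wt x y).
Proof. by move=> x_C y_C; rewrite -F2_natr_eq0 -dot_meet_wt self_dual_dot. Qed.

Lemma wt_even x : x \in C -> ~~ odd (wt x).
Proof. by move=> x_C; rewrite -meet_wtxx meet_wt_even. Qed.

Lemma wtD_mod4 x y : x \in C -> y \in C -> wt (x + y) = wt x + wt y %[mod 4].
Proof.
move=> x_C y_C; rewrite -wtD -[meet_wt x y]odd_double_half.
rewrite (negbTE (meet_wt_even x_C y_C)) add0n -mul2n mulnA.
by rewrite [in RHS]addnC mulnC modnMDl.
Qed.

End SelfDual.

Lemma expCi_even (R : numClosedFieldType) w :
  ~~ odd w -> 'i ^+ w = if (w %% 4 == 0)%N then 1 else -1 :> R.
Proof.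
move=> /negbTE even_w; rewrite -[w]odd_double_half even_w add0n -mul2n exprM sqrCi.
rewrite -signr_odd -[4%N]/(2 * 2)%N -muln_modr modn2.
by case: odd; rewrite ?expr0 ?expr1.
Qed.

Lemma mod4_even w : ~~ odd w -> (w %% 4 != 0)%N -> (w %% 4 = 2)%N.
Proof.
move=> /negbTE even_w; rewrite -[w]odd_double_half even_w add0n -mul2n.
by rewrite -[4%N]/(2 * 2)%N -muln_modr modn2; case: odd.
Qed.

Section Enumerators.
Variables (R : numClosedFieldType) (n : nat) (C : {vspace 'rV['F_2]_n}).
Notation vec := 'rV['F_2]_n.

Definition weight_poly : {poly R} := \sum_(x in C) 'X^(wt x).
Definition shadow_poly : {poly R} := \sum_(v | in_shadow C v) 'X^(wt v).

Lemma hsubst_weight_poly a b :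
  hsubst n weight_poly a b = \sum_(u in C) a ^+ (n - wt u) * b ^+ wt u.
Proof. by rewrite hsubst_sum; apply: eq_bigr => u _; rewrite hsubst_Xn ?wt_le. Qed.

Lemma sum_hadamard (a : vec -> R) :
  \sum_(v : vec) (\sum_(u in C) a u * signF2 (dot u v)) *: 'X^(wt v) =
  \sum_(u in C) a u *: ((1 + 'X) ^+ (n - wt u) * (1 - 'X) ^+ wt u).
Proof.
under eq_bigr do rewrite scaler_suml.
rewrite exchange_big /=; apply: eq_bigr => u _.
by rewrite -hadamard_Xwt scaler_sumr; apply: eq_bigr => v _; rewrite scalerA.
Qed.

Hypothesis sdC : self_dual C.

Lemma macwilliams_weight_poly : macwilliams n weight_poly = #|C|%:R *: weight_poly.
Proof.
rewrite /macwilliams hsubst_weight_poly.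
under eq_bigr do rewrite -[_ * _]scale1r.
rewrite -sum_hadamard /weight_poly scaler_sumr [RHS]big_mkcond /=; apply: eq_bigr => v _.
under eq_bigr do rewrite mul1r.
rewrite sum_character => [|x y _ _]; last by rewrite dotDl signF2D.
suff -> : [forall u in C, signF2 (dot u v) == 1 :> R] = (v \in C).
  by case: (v \in C); rewrite ?scale0r.
by rewrite sdC; apply: eq_forallb => u; rewrite signF2_eq1 dotC.
Qed.

Hypothesis seC : singly_even C.

Lemma in_shadow_character v :
  in_shadow C v = [forall u in C, 'i ^+ wt u * signF2 (dot u v) == 1 :> R].
Proof.
have i_wt u : u \in C -> 'i ^+ wt u = if (wt u %% 4 == 0)%N then 1 else -1 :> R.
  by move=> u_C; rewrite expCi_even ?(wt_even sdC).
apply/idP/forall_inP => [/andP[/forallP C0_v v_notC] u u_C | chi_v]; last first.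
  apply/andP; split.
    apply/forallP => y; apply/implyP => /andP[y_C /eqP y4].
    by have := chi_v y y_C; rewrite i_wt // y4 mul1r signF2_eq1 dotC.
  case: seC => x x_C x2; apply/negP => v_C.
  have := chi_v x x_C; rewrite i_wt // x2 (self_dual_dot sdC) //.
  by rewrite signF2_0 mulr1 eqNr oner_eq0.
rewrite i_wt //; have [u4|u2] := eqVneq (wt u %% 4)%N 0%N.
  by have := C0_v u; rewrite /in_C0 u_C u4 eqxx dotC => /eqP ->; rewrite signF2_0 mulr1.
have [y y_C vy] : exists2 y, y \in C & dot v y != 0.
  by move: v_notC; rewrite sdC => /forallPn [y]; rewrite negb_imply => /andP[]; exists y.
have y2 : (wt y %% 4 != 0)%N.
  by apply: contra vy => y4; have := C0_v y; rewrite /in_C0 y_C y4.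
have uy_C0 : in_C0 C (u + y).
  rewrite /in_C0 memvD //= (wtD_mod4 sdC) // -modnDm.
  by rewrite (mod4_even (wt_even sdC u_C) u2) (mod4_even (wt_even sdC y_C) y2).
have := C0_v (u + y); rewrite uy_C0 dotDr /= addr_eq0 oppr_pchar2 ?pchar_Fp // dotC.
move/eqP ->; have [vy0|->] := F2_cases (dot v y); first by rewrite vy0 eqxx in vy.
by rewrite /signF2 oner_eq0 expr1 mulrNN mulr1.
Qed.

Lemma shadow_transform_weight_poly :
  shadow_transform n weight_poly = #|C|%:R *: shadow_poly.
Proof.
have i4 : 'i ^+ 4 = 1 :> R by rewrite -[4%N]/(2 * 2)%N exprM sqrCi sqrrN expr1n.
rewrite /shadow_transform hsubst_weight_poly.
under eq_bigr do rewrite exprZn -scalerAr.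
rewrite -sum_hadamard /shadow_poly scaler_sumr [RHS]big_mkcond /=; apply: eq_bigr => v _.
rewrite sum_character => [|x y x_C y_C]; last first.
  rewrite -(expr_mod _ i4) (wtD_mod4 sdC) // expr_mod // dotDl signF2D.
  by rewrite exprD mulrACA.
by rewrite -in_shadow_character; case: in_shadow; rewrite ?scale0r.
Qed.

Lemma in_shadow_addr v s : in_shadow C v -> in_shadow C s -> v + s \in C.
Proof.
rewrite !in_shadow_character => /forall_inP chi_v /forall_inP chi_s.
rewrite sdC; apply/forall_inP => u u_C.
have /eqP := chi_v u u_C; rewrite -(eqP (chi_s u u_C)) => /(mulfI (expf_neq0 _ (neq0Ci R))).
rewrite -(signF2_eq1 R) dotDl signF2D !(dotC _ u) => ->.
by rewrite -signF2D F2_addrr signF2_0.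
Qed.

Lemma coef_weight_poly_low d : (forall x, x \in C -> x != 0 -> (d <= wt x)%N) ->
  forall j, (j < d)%N -> weight_poly`_j = (j == 0%N)%:R.
Proof.
move=> min_d j lt_jd; rewrite coef_sum (bigD1 0) ?mem0v //= wt0 coefXn.
rewrite big1 ?addr0 // => x /andP[x_C x_neq0]; rewrite coefXn.
by case: eqP => // wt_x; have := min_d x x_C x_neq0; lia.
Qed.

Lemma coef_shadow_poly_low d s : (forall x, x \in C -> x != 0 -> (d <= wt x)%N) ->
  in_shadow C s -> forall j, (j < d - wt s)%N -> shadow_poly`_j = (j == wt s)%:R.
Proof.
move=> min_d s_S j lt_j; rewrite coef_sum (bigD1 s) //= coefXn.
rewrite big1 ?addr0 // => v /andP[v_S v_neq_s]; rewrite coefXn.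
case: eqP => // wt_v; have vs_neq0 : v + s != 0.
  by apply: contra v_neq_s => /eqP vs0; rewrite -[v]addr0 -(addvv s) addrA vs0 add0r.
have := min_d _ (in_shadow_addr v_S s_S) vs_neq0; have := wt_addr_le v s; lia.
Qed.

Lemma size_weight_poly : (size weight_poly <= n.+1)%N.
Proof.
apply: leq_trans (size_sum _ _ _) _; apply/bigmax_leqP => x _.
by rewrite size_polyXn ltnS wt_le.
Qed.

Lemma weight_poly_even : weight_poly \Po (- 'X) = weight_poly.
Proof.
rewrite rmorph_sum; apply: eq_bigr => x x_C /=.
rewrite rmorphXn /= comp_polyX -[wt x]odd_double_half (negbTE (wt_even sdC x_C)).
by rewrite add0n -mul2n !exprM sqrrN.
Qed.

End Enumerators.

Lemma map_weight_enum (R : numClosedFieldType) n (C : {vspace 'rV['F_2]_n}) :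
  map_poly intr (weight_enum C) = weight_poly R C.
Proof.
by rewrite rmorph_sum; apply: eq_bigr => x _; rewrite rmorphXn /= map_polyX.
Qed.

Theorem mainTheorem2 (m : nat) (C D : {vspace 'rV['F_2]_(24 * m + 4)}) :
  self_dual C -> singly_even C -> minimal_shadow C ->
  is_nkd_code C (12 * m + 2) (4 * m + 2) ->
  self_dual D -> singly_even D -> minimal_shadow D ->
  is_nkd_code D (12 * m + 2) (4 * m + 2) ->
  weight_enum C = weight_enum D.
Proof.
move=> sdC seC [[sC sC_S wt_sC] _] [dimC [_ minC]] sdD seD [[sD sD_S wt_sD] _] [dimD [_ minD]].
apply: (map_inj_poly (@intr_inj algC) (rmorph0 _)); rewrite !map_weight_enum.
apply/eqP; rewrite -subr_eq0; apply/eqP.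
have card_CD : #|C| = #|D| by rewrite !card_vspace dimC dimD.
apply: (even_macwilliams_eigen_eq0 (c := #|C|%:R)).
- by rewrite pnatr_eq0 -lt0n (cardD1 0) mem0v.
- apply: leq_trans (size_add _ _) _.
  by rewrite size_opp geq_max; apply/andP; split; apply: size_weight_poly.
- by rewrite rmorphB /= !weight_poly_even.
- by rewrite macwilliamsB !macwilliams_weight_poly // card_CD scalerBr.
- apply/dvdp_XnP => j lt_j; rewrite coefB (coef_weight_poly_low _ minC) //.
  by rewrite (coef_weight_poly_low _ minD) // subrr.
- apply/dvdp_XnP => j lt_j; have lt_j2 : (j < 4 * m + 2 - 2)%N by lia.
  rewrite shadow_transformB !shadow_transform_weight_poly //.
  rewrite card_CD -scalerBr coefZ coefB (coef_shadow_poly_low _ sdC seC minC sC_S) ?wt_sC //.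
  by rewrite (coef_shadow_poly_low _ sdD seD minD sD_S) ?wt_sD ?subrr ?mulr0.
Qed.
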